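(* There is a one-to-one correspondence between isomorphism classes of real metric 3-Leibniz algebras $V$ and isomorphism classes of pairs $(\mathfrak{g},V)$ where $\mathfrak{g}$ is a metric real Lie algebra and $V$ is a faithful real orthogonal representation of $\mathfrak{g}$.
   Context: All vector spaces are finite-dimensional and real. A real metric 3-Leibniz algebra is a real vector space $V$ with a nondegenerate symmetric bilinear form $\langle-,-\rangle$ and a trilinear map $[-,-,-]:V^3\to V$ satisfying, for all $x,y,z,s,t$: the fundamental identity $[x,y,[z,s,t]]=[[x,y,z],s,t]+[z,[x,y,s],t]+[z,s,[x,y,t]]$; unitarity $\langle[x,y,z],s\rangle+\langle z,[x,y,s]\rangle=0$; and symmetry $\langle[x,y,z],s\rangle=\langle[z,s,x],y\rangle$. An isomorphism of such algebras is a linear bijection $\varphi:V\to W$ with $[\varphi u,\varphi v,\varphi w]_W=\varphi[u,v,w]_V$ and $\langle\varphi u,\varphi v\rangle_W=\langle u,v\rangle_V$. A metric real Lie algebra is a real Lie algebra $\mathfrak{g}$ with a nondegenerate symmetric ad-invariant bilinear form $(-,-)$ (any signature). A real orthogonal representation is a Lie algebra homomorphism $\mathfrak{g}\to\mathfrak{so}(V)$ for $V$ with nondegenerate symmetric form $\langle-,-\rangle$; faithful means injective, so $\mathfrak{g}$ may be viewed as a subalgebra of $\mathfrak{so}(V)$. Pairs $(\mathfrak{g}_V,V)$ and $(\mathfrak{g}_W,W)$ are isomorphic if there is an isometry $\varphi:V\to W$ with $\mathfrak{g}_W=\varphi\circ\mathfrak{g}_V\circ\varphi^{-1}$ and such that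 $x\mapsto\varphi\circ x\circ\varphi^{-1}$ is an isometry of metric Lie algebras $\mathfrak{g}_V\to\mathfrak{g}_W$. *)

From HB Require Import structures.
From mathcomp Require Import all_boot all_order all_algebra.
From mathcomp Require Import reals.
Set Implicit Arguments. Unset Strict Implicit. Unset Printing Implicit Defensive.
Import Order.TTheory GRing.Theory Num.Theory.
Local Open Scope ring_scope.

Section Defs.
Variable R : realType.

(* Vectors of an n-dimensional real vector space are row vectors 'rV[R]_n;
   a symmetric bilinear form is given by a Gram matrix B: <u,v> = u B v^T. *)
Definition bform n (B : 'M[R]_n) (u v : 'rV[R]_n) : R := (u *m B *m v^T) 0 0.

Definition nondeg_sym_form n (B : 'M[R]_n) : Prop :=
  (forall u v, bform B u v = bform B v u) /\
  (forall u, (forall v, bform B u v = 0) -> u = 0).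

Definition linear_map n m (f : 'rV[R]_n -> 'rV[R]_m) : Prop :=
  forall (a : R) u v, f (a *: u + v) = a *: f u + f v.

Definition trilinear n (br : 'rV[R]_n -> 'rV[R]_n -> 'rV[R]_n -> 'rV[R]_n) : Prop :=
  (forall y z, linear_map (fun x => br x y z)) /\
  (forall x z, linear_map (fun y => br x y z)) /\
  (forall x y, linear_map (fun z => br x y z)).

Record leib3 := Leib3 {
  l3dim : nat;
  l3form : 'M[R]_l3dim;
  l3br : 'rV[R]_l3dim -> 'rV[R]_l3dim -> 'rV[R]_l3dim -> 'rV[R]_l3dim }.
Arguments l3br : clear implicits.

Definition is_metric3Leibniz (L : leib3) : Prop :=
  let br := l3br L in let f := bform (l3form L) in
  nondeg_sym_form (l3form L) /\ trilinear br /\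
  (forall x y z s t,
     br x y (br z s t) = br (br x y z) s t + br z (br x y s) t + br z s (br x y t)) /\
  (forall x y z s, f (br x y z) s + f z (br x y s) = 0) /\
  (forall x y z s, f (br x y z) s = f (br z s x) y).

Definition leib3_iso (L L' : leib3) : Prop :=
  exists phi : 'rV[R]_(l3dim L) -> 'rV[R]_(l3dim L'),
    linear_map phi /\ bijective phi /\
    (forall u v w, l3br L' (phi u) (phi v) (phi w) = phi (l3br L u v w)) /\
    (forall u v, bform (l3form L') (phi u) (phi v) = bform (l3form L) u v).

(* ---------- pairs (g, V): g a metric real Lie algebra, V a faithful real
   orthogonal representation; g is viewed as a Lie subalgebra of so(V),
   endomorphisms of V acting on row vectors by v |-> v *m X. ---------- *)
Record lieRep := LieRep {
  lrdim : nat;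
  lrform : 'M[R]_lrdim;
  lrg : 'M[R]_lrdim -> Prop;
  lrh : 'M[R]_lrdim -> 'M[R]_lrdim -> R  (* metric on g (only its values on g matter) *)
}.
Arguments lrg : clear implicits.
Arguments lrh : clear implicits.

Definition lie_br n (X Y : 'M[R]_n) : 'M[R]_n := X * Y - Y * X.

Definition is_metric_lie_rep (p : lieRep) : Prop :=
  let g := lrg p in let h := lrh p in let B := lrform p in
  nondeg_sym_form B /\
  g 0 /\ (forall (a : R) X Y, g X -> g Y -> g (a *: X + Y)) /\
  (forall X, g X -> forall u v, bform B (u *m X) v + bform B u (v *m X) = 0) /\
  (forall X Y, g X -> g Y -> g (lie_br X Y)) /\
  (forall (a : R) X Y Z, g X -> g Y -> g Z -> h (a *: X + Y) Z = a * h X Z + h Y Z) /\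
  (forall X Y, g X -> g Y -> h X Y = h Y X) /\
  (forall X, g X -> (forall Y, g Y -> h X Y = 0) -> X = 0) /\
  (forall X Y Z, g X -> g Y -> g Z -> h (lie_br X Y) Z + h Y (lie_br X Z) = 0).

Definition conj_by n m (phi : 'rV[R]_n -> 'rV[R]_m) (X : 'M[R]_n) (Y : 'M[R]_m) :=
  forall v, phi (v *m X) = (phi v) *m Y.

Definition lieRep_iso (p q : lieRep) : Prop :=
  exists phi : 'rV[R]_(lrdim p) -> 'rV[R]_(lrdim q),
    linear_map phi /\ bijective phi /\
    (forall u v, bform (lrform q) (phi u) (phi v) = bform (lrform p) u v) /\
    (forall X, lrg p X -> exists Y, lrg q Y /\ conj_by phi X Y) /\
    (forall Y, lrg q Y -> exists X, lrg p X /\ conj_by phi X Y) /\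
    (forall X1 X2 Y1 Y2, lrg p X1 -> lrg p X2 -> lrg q Y1 -> lrg q Y2 ->
       conj_by phi X1 Y1 -> conj_by phi X2 Y2 -> lrh q Y1 Y2 = lrh p X1 X2).

End Defs.
Arguments l3br {R}.
Arguments lrg {R}.
Arguments lrh {R}.

From HB Require Import structures.
From mathcomp Require Import all_boot all_order all_algebra.
From mathcomp Require Import reals.
From mathcomp Require Import zify.
From Stdlib Require Import ClassicalEpsilon.
Set Implicit Arguments. Unset Strict Implicit. Unset Printing Implicit Defensive.
Import Order.TTheory GRing.Theory Num.Theory.
Local Open Scope ring_scope.

(* A metric Lie algebra g acting faithfully and orthogonally on V defines the
   3-bracket [x,y,z] = z D(x,y), where D(x,y) in g is dual, under the metric of
   g, to X |-> <x X, y>; skewness of g and ad-invariance of its metric make this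
   a metric 3-Leibniz algebra.  Conversely a metric 3-Leibniz algebra yields
   g = span of the maps ad(x,y) = [x,y,-], a Lie subalgebra of so(V) by the
   fundamental identity, with metric (ad(x,y), X) = <x X, y>, well defined by
   the symmetry axiom.  Nondegeneracy of both metrics forces g to be spanned by
   the D(x,y); hence the two constructions are mutually inverse, and an isometry
   of V is an isomorphism of pairs exactly when it intertwines the 3-brackets. *)

Section Correspondence.
Variable R : realType.

Definition lin_closed (vT : lmodType R) (P : vT -> Prop) :=
  P 0 /\ forall (a : R) X Y, P X -> P Y -> P (a *: X + Y).

Definition linear_on (vT wT : lmodType R) (P : vT -> Prop) (f : vT -> wT) :=
  forall (a : R) X Y, P X -> P Y -> f (a *: X + Y) = a *: f X + f Y.

Section LinearOn.
Variables (vT wT : lmodType R) (P : vT -> Prop) (f : vT -> wT).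
Hypotheses (P_closed : lin_closed P) (f_lin : linear_on P f).

Lemma lin_closedZ a X : P X -> P (a *: X).
Proof. by case: P_closed => P0 PL PX; rewrite -[_ *: _]addr0; apply: PL. Qed.

Lemma lin_closedD X Y : P X -> P Y -> P (X + Y).
Proof. by case: P_closed => _ PL PX PY; rewrite -[X]scale1r; apply: PL. Qed.

Lemma lin_closed_sum I (s : seq I) (F : I -> vT) :
  (forall i, P (F i)) -> P (\sum_(i <- s) F i).
Proof.
move=> PF; elim: s => [|i s IH]; first by rewrite big_nil; case: P_closed.
by rewrite big_cons; apply: lin_closedD.
Qed.

Lemma linear_on0 : f 0 = 0.
Proof.
have P0 := proj1 P_closed; have := f_lin 1 P0 P0.
by rewrite scaler0 addr0 scale1r => f00; apply: (addrI (f 0)); rewrite addr0 -f00.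
Qed.

Lemma linear_onZ a X : P X -> f (a *: X) = a *: f X.
Proof. by move=> PX; rewrite -[_ *: X]addr0 f_lin ?linear_on0 ?addr0 //; case: P_closed. Qed.

Lemma linear_onD X Y : P X -> P Y -> f (X + Y) = f X + f Y.
Proof. by move=> PX PY; have := f_lin 1 PX PY; rewrite !scale1r. Qed.

Lemma linear_on_sum I (s : seq I) (F : I -> vT) :
  (forall i, P (F i)) -> f (\sum_(i <- s) F i) = \sum_(i <- s) f (F i).
Proof.
move=> PF; elim: s => [|i s IH]; first by rewrite !big_nil linear_on0.
by rewrite !big_cons linear_onD ?IH //; apply: lin_closed_sum.
Qed.

End LinearOn.

Lemma lin_closedT (vT : lmodType R) : lin_closed (fun _ : vT => True).
Proof. by []. Qed.

Lemma linear_map_on n m (f : 'rV[R]_n -> 'rV[R]_m) :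
  linear_map f -> linear_on (fun _ => True) f.
Proof. by move=> hf a u v _ _; apply: hf. Qed.

Lemma bformDl n (B : 'M[R]_n) a u v w :
  bform B (a *: u + v) w = a * bform B u w + bform B v w.
Proof. by rewrite /bform !mulmxDl -!scalemxAl !mxE. Qed.

Lemma bformDr n (B : 'M[R]_n) a u v w :
  bform B u (a *: v + w) = a * bform B u v + bform B u w.
Proof. by rewrite /bform linearD linearZ /= mulmxDr -scalemxAr !mxE. Qed.

Lemma bformBl n (B : 'M[R]_n) u v w : bform B (u - v) w = bform B u w - bform B v w.
Proof. by rewrite /bform !mulmxBl !mxE. Qed.

Lemma bformNl n (B : 'M[R]_n) u w : bform B (- u) w = - bform B u w.
Proof. by rewrite /bform !mulNmx mxE. Qed.

Lemma bform_suml n (B : 'M[R]_n) I (s : seq I) (F : I -> 'rV[R]_n) w :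
  bform B (\sum_(i <- s) F i) w = \sum_(i <- s) bform B (F i) w.
Proof. by rewrite /bform !mulmx_suml summxE. Qed.

Lemma bform_sumr n (B : 'M[R]_n) I (s : seq I) (F : I -> 'rV[R]_n) w :
  bform B w (\sum_(i <- s) F i) = \sum_(i <- s) bform B w (F i).
Proof. by rewrite /bform raddf_sum mulmx_sumr summxE. Qed.

Section FiniteDimension.
Variable vT : vectType R.

Lemma vspace_lin_closed (U : {vspace vT}) : lin_closed (fun X => X \in U).
Proof. by split=> [|a X Y XU YU]; rewrite ?mem0v // memvD // memvZ. Qed.

Lemma span_lin_closed (P : vT -> Prop) (s : seq vT) X :
  lin_closed P -> (forall x, x \in s -> P x) -> X \in <<s>>%VS -> P X.
Proof.
move=> Pcl Ps /(@coord_span _ _ _ (in_tuple s)) ->.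
by apply: lin_closed_sum => // i; apply: lin_closedZ => //; apply/Ps/mem_nth.
Qed.

(* Grow a family of vectors of P one vector at a time until it spans P; the
   dimension of its span increases at each step, so this stops. *)
Lemma lin_closed_vspace (P : vT -> Prop) :
  lin_closed P -> exists U : {vspace vT}, forall X, P X <-> X \in U.
Proof.
move=> Pcl.
suff grow k (s : seq vT) : (\dim {:vT} - \dim <<s>> <= k)%N ->
    (forall x, x \in s -> P x) -> exists U : {vspace vT}, forall X, P X <-> X \in U.
  by apply: (grow _ [::] (leqnn _)).
elim: k s => [|k IH] s dim_s Ps.
  exists <<s>>%VS => X; split=> [_|]; last exact: span_lin_closed.
  have /eqP -> : <<s>>%VS == fullv by rewrite eqEdim subvf /= -subn_eq0 -leqn0.
  exact: memvf.
have [[X PX Xs] | noX] := classic (exists2 X, P X & X \notin <<s>>%VS); last first.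
  exists <<s>>%VS => X; split=> [PX|]; last exact: span_lin_closed.
  by apply/negPn/negP => Xs; apply: noX; exists X.
apply: (IH (X :: s)) => [|x]; last by rewrite inE => /predU1P [->|/Ps].
have lt_dim : (\dim <<s>> < \dim <<X :: s>>)%N.
  have sub : (<<s>> <= <<X :: s>>)%VS by rewrite span_cons addvSr.
  rewrite (ltn_leqif (dimv_leqif_eq sub)); apply: contraNN Xs => /eqP ->.
  by rewrite memv_span // mem_head.
have := dimvS (subvf <<X :: s>>); lia.
Qed.

Lemma vbasis_nth_mem (U : {vspace vT}) (i : 'I_(\dim U)) : (vbasis U)`_i \in U.
Proof. by apply: vbasis_mem; rewrite mem_nth // size_tuple. Qed.

Lemma linear_on_vbasis_sum (wT : lmodType R) (U : {vspace vT}) (k : vT -> wT) c :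
  linear_on (fun Y => Y \in U) k ->
  k (\sum_(i < \dim U) c i *: (vbasis U)`_i) = \sum_(i < \dim U) c i *: k (vbasis U)`_i.
Proof.
move=> k_lin; have Ucl := vspace_lin_closed U.
rewrite (linear_on_sum Ucl k_lin); last by move=> i; rewrite memvZ ?vbasis_nth_mem.
by apply: eq_bigr => i _; rewrite (linear_onZ Ucl k_lin) ?vbasis_nth_mem.
Qed.

Lemma linear_on_vbasis (wT : lmodType R) (U : {vspace vT}) (k : vT -> wT) X :
  linear_on (fun Y => Y \in U) k -> X \in U ->
  k X = \sum_(i < \dim U) coord (vbasis U) i X *: k (vbasis U)`_i.
Proof. by move=> k_lin XU; rewrite {1}(coord_vbasis XU) linear_on_vbasis_sum. Qed.

Section InjectiveOn.
Variables (U : {vspace vT}) (r : nat) (f : vT -> 'rV[R]_r).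
Hypotheses (f_lin : linear_on (fun X => X \in U) f)
           (f_inj : forall X, X \in U -> f X = 0 -> X = 0).

Lemma free_map_vbasis : free (map_tuple f (vbasis U)).
Proof.
have /freeP basis_free := basis_free (vbasisP U).
apply/freeP => c sum0 i; apply: basis_free.
apply: f_inj; first by apply: memv_suml => j _; rewrite memvZ ?vbasis_nth_mem.
rewrite linear_on_vbasis_sum // -[RHS]sum0; apply: eq_bigr => j _.
by rewrite (nth_map 0) // size_tuple.
Qed.

Lemma dim_injective_on : (\dim U <= r)%N.
Proof.
have /eqP := free_map_vbasis; rewrite size_tuple => <-.
by have := dimvS (subvf <<map_tuple f (vbasis U)>>); rewrite dimvf dim_matrix mul1r.
Qed.

Lemma surjective_injective_on : \dim U = r -> forall w, exists2 X, X \in U & f X = w.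
Proof.
move=> dimU w; set T := map_tuple f (vbasis U).
have spanT : <<T>>%VS = fullv.
  apply/eqP; rewrite eqEdim subvf dimvf dim_matrix mul1r /=.
  by have /eqP -> := free_map_vbasis; rewrite size_tuple dimU.
have /coord_span -> : w \in <<T>>%VS by rewrite spanT memvf.
exists (\sum_i coord T i w *: (vbasis U)`_i).
  by apply: memv_suml => j _; rewrite memvZ ?vbasis_nth_mem.
rewrite linear_on_vbasis_sum //; apply: eq_bigr => j _.
by rewrite (nth_map 0) // size_tuple.
Qed.

End InjectiveOn.

End FiniteDimension.

Section NondegenerateForm.
Variables (vT : vectType R) (P : vT -> Prop) (h : vT -> vT -> R).
Hypotheses (P_closed : lin_closed P)
  (h_linl : forall a X Y Z, P X -> P Y -> P Z -> h (a *: X + Y) Z = a * h X Z + h Y Z)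
  (h_sym : forall X Y, P X -> P Y -> h X Y = h Y X)
  (h_nondeg : forall X, P X -> (forall Y, P Y -> h X Y = 0) -> X = 0).

Lemma form_linear_onl Z : P Z -> linear_on P (fun X => h X Z : R^o).
Proof. by move=> PZ a X Y PX PY; apply: h_linl. Qed.

Lemma form_linear_onr Z : P Z -> linear_on P (fun X => h Z X : R^o).
Proof.
move=> PZ a X Y PX PY; rewrite !(h_sym PZ) ?h_linl //.
exact: (proj2 P_closed).
Qed.

Lemma form_suml I (s : seq I) (F : I -> vT) Z : (forall i, P (F i)) -> P Z ->
  h (\sum_(i <- s) F i) Z = \sum_(i <- s) h (F i) Z.
Proof. by move=> PF PZ; have := linear_on_sum P_closed (form_linear_onl PZ) s PF. Qed.

Lemma form_addl X Y Z : P X -> P Y -> P Z -> h (X + Y) Z = h X Z + h Y Z.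
Proof. by move=> PX PY PZ; have := h_linl 1 PX PY PZ; rewrite scale1r mul1r. Qed.

Lemma form_oppl X Z : P X -> P Z -> h (- X) Z = - h X Z.
Proof.
move=> PX PZ; rewrite -scaleN1r.
exact: etrans (linear_onZ P_closed (form_linear_onl PZ) (-1) PX) (scaleN1r _).
Qed.

Lemma form_inj A A' : P A -> P A' -> (forall Y, P Y -> h A Y = h A' Y) -> A = A'.
Proof.
move=> PA PA' eqA; apply/eqP; rewrite -subr_eq0 addrC -scaleN1r; apply/eqP.
apply: h_nondeg => [|Y PY]; first exact: (proj2 P_closed).
by rewrite h_linl // eqA // mulN1r addNr.
Qed.

Definition form_coords (W : {vspace vT}) Z : 'rV[R]_(\dim W) :=
  \row_j h Z (vbasis W)`_j.

Section Coordinates.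
Variables (U W : {vspace vT}).
Hypotheses (PU : forall X, P X <-> X \in U) (WP : forall Y, Y \in W -> P Y).

Lemma form_coords_linear : linear_on (fun X => X \in U) (form_coords W).
Proof.
move=> a X Y /PU PX /PU PY; apply/rowP => j.
by rewrite !mxE h_linl //; apply/WP/vbasis_nth_mem.
Qed.

Lemma form_coords0 Z Y : P Z -> form_coords W Z = 0 -> Y \in W -> h Z Y = 0.
Proof.
move=> PZ /rowP Z0 YW.
have ZW : linear_on (fun X => X \in W) (fun X => h Z X : R^o).
  by move=> a X1 X2 /WP P1 /WP P2; apply: form_linear_onr.
rewrite (linear_on_vbasis ZW YW); apply: big1 => j _.
by have := Z0 j; rewrite !mxE => ->; rewrite scaler0.
Qed.

End Coordinates.

Lemma form_spanning (Q : vT -> Prop) : lin_closed Q -> (forall X, Q X -> P X) ->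
  (forall Z, P Z -> (forall Y, Q Y -> h Z Y = 0) -> Z = 0) -> forall X, P X -> Q X.
Proof.
move=> Q_closed QP Q_nondeg.
have [U PU] := lin_closed_vspace P_closed; have [W QW] := lin_closed_vspace Q_closed.
have WP Y : Y \in W -> P Y by move/QW/QP.
have WU : (W <= U)%VS by apply/subvP => Y /WP/PU.
suff /eqP WeqU : W == U by move=> X /PU; rewrite -WeqU => /QW.
rewrite eqEdim WU; apply: (dim_injective_on (form_coords_linear PU WP)).
move=> Z /PU PZ Z0; apply: Q_nondeg => // Y /QW.
exact: form_coords0.
Qed.

Lemma form_riesz (phi : vT -> R^o) : linear_on P phi ->
  exists2 A, P A & forall Y, P Y -> h A Y = phi Y.
Proof.
move=> phi_lin; have [U PU] := lin_closed_vspace P_closed.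
have UP Y : Y \in U -> P Y by move/PU.
have coords_inj Z : Z \in U -> form_coords U Z = 0 -> Z = 0.
  by move=> /PU PZ Z0; apply: h_nondeg => // Y /PU; apply: form_coords0.
have [A /PU PA eqA] := surjective_injective_on (form_coords_linear PU UP) coords_inj
  erefl (\row_j phi (vbasis U)`_j).
exists A => // Y /PU YU.
have phiU : linear_on (fun X => X \in U) phi by move=> a X1 X2 /UP P1 /UP P2; apply: phi_lin.
have AU : linear_on (fun X => X \in U) (fun X => h A X : R^o).
  by move=> a X1 X2 /UP P1 /UP P2; apply: form_linear_onr.
rewrite (linear_on_vbasis AU YU) (linear_on_vbasis phiU YU); apply: eq_bigr => j _.
by move/rowP: eqA => /(_ j); rewrite !mxE => ->.
Qed.

End NondegenerateForm.

Definition pair_span n (vT : lmodType R) (F : 'rV[R]_n -> 'rV[R]_n -> vT) (X : vT) :=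
  exists s : seq ('rV[R]_n * 'rV[R]_n), X = \sum_(pr <- s) F pr.1 pr.2.

Section PairSpan.
Variables (n : nat) (vT : lmodType R) (F : 'rV[R]_n -> 'rV[R]_n -> vT).

Lemma pair_span_gen x y : pair_span F (F x y).
Proof. by exists [:: (x, y)]; rewrite big_seq1. Qed.

Lemma pair_span_closed : (forall a x y, F (a *: x) y = a *: F x y) -> lin_closed (pair_span F).
Proof.
move=> FZ; split=> [|a X Y [s ->] [t ->]]; first by exists [::]; rewrite big_nil.
exists ([seq (a *: pr.1, pr.2) | pr <- s] ++ t).
by rewrite big_cat big_map scaler_sumr; congr (_ + _); apply: eq_bigr => pr _; rewrite FZ.
Qed.

Lemma pair_span_min (P : vT -> Prop) : lin_closed P -> (forall x y, P (F x y)) ->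
  forall X, pair_span F X -> P X.
Proof. by move=> Pcl PF X [s ->]; apply: lin_closed_sum. Qed.

End PairSpan.

Definition repD (p : lieRep R) (x y : 'rV[R]_(lrdim p)) : 'M[R]_(lrdim p) :=
  epsilon (inhabits 0) (fun A => lrg p A /\
     forall Y, lrg p Y -> lrh p A Y = bform (lrform p) (x *m Y) y).

Definition leib3_of_rep (p : lieRep R) : leib3 R :=
  @Leib3 R (lrdim p) (lrform p) (fun x y z => z *m repD x y).

Section RepToLeibniz.
Variable p : lieRep R.
Hypothesis p_metric : is_metric_lie_rep p.
Local Notation n := (lrdim p).
Local Notation g := (lrg p).
Local Notation h := (lrh p).
Local Notation B := (lrform p).
Local Notation D := (@repD p).

Lemma rep_form : nondeg_sym_form B.
Proof. by case: p_metric. Qed.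

Lemma rep_closed : lin_closed g.
Proof. by case: p_metric => _ [g0 [glin _]]; split. Qed.

Lemma rep_skew X u v : g X -> bform B (u *m X) v + bform B u (v *m X) = 0.
Proof. by move=> gX; case: p_metric => _ [_ [_ [skew _]]]; apply: skew. Qed.

Lemma rep_lie_br X Y : g X -> g Y -> g (lie_br X Y).
Proof. by case: p_metric => _ [_ [_ [_ [br _]]]]; apply: br. Qed.

Lemma rep_h_linl a X Y Z : g X -> g Y -> g Z -> h (a *: X + Y) Z = a * h X Z + h Y Z.
Proof. by case: p_metric => _ [_ [_ [_ [_ [linl _]]]]]; apply: linl. Qed.

Lemma rep_h_sym X Y : g X -> g Y -> h X Y = h Y X.
Proof. by case: p_metric => _ [_ [_ [_ [_ [_ [sym _]]]]]]; apply: sym. Qed.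

Lemma rep_h_nondeg X : g X -> (forall Y, g Y -> h X Y = 0) -> X = 0.
Proof. by case: p_metric => _ [_ [_ [_ [_ [_ [_ [nd _]]]]]]]; apply: nd. Qed.

Lemma rep_h_invariant X Y Z : g X -> g Y -> g Z ->
  h (lie_br X Y) Z + h Y (lie_br X Z) = 0.
Proof. by case: p_metric => _ [_ [_ [_ [_ [_ [_ [_ inv]]]]]]]; apply: inv. Qed.

Lemma rep_h_inj A A' : g A -> g A' -> (forall Y, g Y -> h A Y = h A' Y) -> A = A'.
Proof. exact: (form_inj rep_closed rep_h_linl rep_h_nondeg). Qed.

Lemma repD_spec x y : g (D x y) /\ forall Y, g Y -> h (D x y) Y = bform B (x *m Y) y.
Proof.
apply: (epsilon_spec (inhabits 0) (fun A => g A /\ _)).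
have [|A gA hA] := form_riesz rep_closed rep_h_linl rep_h_sym rep_h_nondeg
  (phi := fun Y => bform B (x *m Y) y : R^o); last by exists A.
by move=> a X Y _ _; rewrite mulmxDr -scalemxAr bformDl.
Qed.

Lemma repD_mem x y : g (D x y).
Proof. by case: (repD_spec x y). Qed.
#[local] Hint Resolve repD_mem : core.

Lemma repD_form x y Y : g Y -> h (D x y) Y = bform B (x *m Y) y.
Proof. by case: (repD_spec x y) => _; apply. Qed.

Lemma repD_unique x y A : g A -> (forall Y, g Y -> h A Y = bform B (x *m Y) y) ->
  A = D x y.
Proof.
by move=> gA hA; apply: rep_h_inj (repD_mem x y) _ => // Y gY; rewrite hA ?repD_form.
Qed.

Lemma repDDl a x x' y : D (a *: x + x') y = a *: D x y + D x' y.
Proof.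
symmetry; apply: repD_unique => [|Y gY]; first by apply: (proj2 rep_closed).
by rewrite rep_h_linl // !repD_form // mulmxDl -scalemxAl bformDl.
Qed.

Lemma repDDr a x y y' : D x (a *: y + y') = a *: D x y + D x y'.
Proof.
symmetry; apply: repD_unique => [|Y gY]; first by apply: (proj2 rep_closed).
by rewrite rep_h_linl // !repD_form // bformDr.
Qed.

Lemma repDZl a x y : D (a *: x) y = a *: D x y.
Proof. exact: (linear_onZ (@lin_closedT _) (fun a x x' _ _ => repDDl a x x' y)). Qed.

Lemma rep_h_lie_brl A X Y : g A -> g X -> g Y -> h (lie_br A X) Y = h A (lie_br X Y).
Proof.
move=> gA gX gY; have := rep_h_invariant gX gA gY.
have -> : lie_br X A = - lie_br A X by rewrite /lie_br opprB.
have gAX := rep_lie_br gA gX.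
rewrite (form_oppl rep_closed rep_h_linl) // => /eqP.
by rewrite addrC subr_eq0 => /eqP.
Qed.

Lemma repD_der z s X : g X -> D (z *m X) s + D z (s *m X) = lie_br (D z s) X.
Proof.
move=> gX; apply: rep_h_inj => [||Y gY]; first exact: (lin_closedD rep_closed).
  exact: rep_lie_br.
have gXY := rep_lie_br gX gY.
rewrite (form_addl rep_h_linl) // !repD_form // rep_h_lie_brl // repD_form //.
rewrite /lie_br mulmxBr -!mulmxE !mulmxA bformBl.
by have /eqP := rep_skew (z *m Y) s gX; rewrite addr_eq0 => /eqP ->; rewrite opprK.
Qed.

Lemma leib3_of_rep_metric : is_metric3Leibniz (leib3_of_rep p).
Proof.
split; first exact: rep_form.
split.
  split; first by move=> y z a x x'; rewrite /= repDDl mulmxDr scalemxAr.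
  split; first by move=> x z a y y'; rewrite /= repDDr mulmxDr scalemxAr.
  by move=> x y a z z'; rewrite /= mulmxDl scalemxAl.
split.
  move=> x y z s t /=; rewrite -!mulmxA -!mulmxDr repD_der //.
  by rewrite /lie_br -!mulmxE subrK.
split; first by move=> x y z s /=; apply: rep_skew.
move=> x y z s /=.
by rewrite -(repD_form z s (repD_mem x y)) -(repD_form x y (repD_mem z s)) rep_h_sym.
Qed.

Lemma repD_span X : g X -> pair_span D X.
Proof.
have [_ B_nondeg] := rep_form.
move: X; apply: (form_spanning rep_closed rep_h_linl rep_h_sym).
- by apply: pair_span_closed; apply: repDZl.
- exact: pair_span_min rep_closed repD_mem.
move=> Z gZ Z_orth; apply/eqP/mulmxP => t; rewrite mulmx0.
apply: B_nondeg => v; rewrite -repD_form // rep_h_sym //.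
exact/Z_orth/pair_span_gen.
Qed.

End RepToLeibniz.

Definition admx (L : leib3 R) (x y : 'rV[R]_(l3dim L)) : 'M[R]_(l3dim L) :=
  \matrix_(i, j) (l3br L x y (delta_mx 0 i)) 0 j.

Definition pair_form (L : leib3 R) (s : seq ('rV[R]_(l3dim L) * 'rV[R]_(l3dim L)))
    (Y : 'M[R]_(l3dim L)) : R :=
  \sum_(pr <- s) bform (l3form L) (pr.1 *m Y) pr.2.

(* The metric of g, evaluated through an arbitrary decomposition of X as a sum
   of [admx x y]; it does not depend on the decomposition (see
   [ad_form_repr]). *)
Definition ad_form (L : leib3 R) (X Y : 'M[R]_(l3dim L)) : R :=
  @pair_form L (epsilon (inhabits [::]) (fun s => X = \sum_(pr <- s) @admx L pr.1 pr.2)) Y.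

Definition rep_of_leib3 (L : leib3 R) : lieRep R :=
  @LieRep R (l3dim L) (l3form L) (pair_span (@admx L)) (@ad_form L).

Section LeibnizToRep.
Variable L : leib3 R.
Hypothesis L_metric : is_metric3Leibniz L.
Local Notation n := (l3dim L).
Local Notation br := (l3br L).
Local Notation B := (l3form L).
Local Notation A := (@admx L).
Local Notation g := (pair_span A).
Local Notation h := (@ad_form L).
Local Notation pform := (@pair_form L).

Lemma leib_form : nondeg_sym_form B.
Proof. by case: L_metric. Qed.

Lemma leib_trilinear : trilinear br.
Proof. by case: L_metric => _ []. Qed.

Lemma leib_fundamental x y z s t :
  br x y (br z s t) = br (br x y z) s t + br z (br x y s) t + br z s (br x y t).
Proof. by case: L_metric => _ [_ [fund _]]; apply: fund. Qed.

Lemma leib_unitary x y z s : bform B (br x y z) s + bform B z (br x y s) = 0.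
Proof. by case: L_metric => _ [_ [_ [unit _]]]; apply: unit. Qed.

Lemma leib_sym x y z s : bform B (br x y z) s = bform B (br z s x) y.
Proof. by case: L_metric => _ [_ [_ [_ sym]]]; apply: sym. Qed.

Lemma mul_admx z x y : z *m A x y = br x y z.
Proof.
have [_ [_ lin_z]] := leib_trilinear; have z_lin := linear_map_on (lin_z x y).
rewrite [in RHS](row_sum_delta z) (linear_on_sum (@lin_closedT _) z_lin) //.
apply/rowP => j; rewrite !mxE summxE; apply: eq_bigr => i _.
by rewrite (linear_onZ (@lin_closedT _) z_lin) // !mxE.
Qed.

Lemma admx_linl y : linear_on (fun _ => True) (fun x => A x y).
Proof.
have [lin_x _] := leib_trilinear.
by move=> a x x' _ _; apply/eqP/mulmxP => t; rewrite mulmxDr -scalemxAr !mul_admx lin_x.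
Qed.

Lemma admx_linr x : linear_on (fun _ => True) (fun y => A x y).
Proof.
have [_ [lin_y _]] := leib_trilinear.
by move=> a y y' _ _; apply/eqP/mulmxP => t; rewrite mulmxDr -scalemxAr !mul_admx lin_y.
Qed.

Lemma admxZl a x y : A (a *: x) y = a *: A x y.
Proof. exact: linear_onZ (@lin_closedT _) (admx_linl y) a x I. Qed.

Lemma admxNl x y : A (- x) y = - A x y.
Proof. by rewrite -scaleN1r admxZl scaleN1r. Qed.

Lemma admx_suml J (r : seq J) (F : J -> 'rV[R]_n) y :
  A (\sum_(i <- r) F i) y = \sum_(i <- r) A (F i) y.
Proof. by have := linear_on_sum (@lin_closedT _) (admx_linl y) r (fun _ => I). Qed.

Lemma admx_sumr J (r : seq J) (F : J -> 'rV[R]_n) x :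
  A x (\sum_(i <- r) F i) = \sum_(i <- r) A x (F i).
Proof. by have := linear_on_sum (@lin_closedT _) (admx_linr x) r (fun _ => I). Qed.

Lemma admx_closed : lin_closed g.
Proof. exact/pair_span_closed/admxZl. Qed.

Lemma admx_skew X u v : g X -> bform B (u *m X) v + bform B u (v *m X) = 0.
Proof.
move=> [s ->]; rewrite !mulmx_sumr bform_suml bform_sumr -big_split /=.
by apply: big1 => pr _; rewrite !mul_admx leib_unitary.
Qed.

Lemma pair_form_linear s a Y Y' :
  pform s (a *: Y + Y') = a * pform s Y + pform s Y'.
Proof.
rewrite /pair_form mulr_sumr -big_split; apply: eq_bigr => pr _ /=.
by rewrite mulmxDr -scalemxAr bformDl.
Qed.

(* The symmetry axiom: both sides equal sum_{s,t} <[u_t, v_t, x_s], y_s>. *)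
Lemma pair_form_swap s t :
  pform s (\sum_(q <- t) A q.1 q.2) = pform t (\sum_(pr <- s) A pr.1 pr.2).
Proof.
rewrite /pair_form; under eq_bigr do rewrite mulmx_sumr bform_suml.
under [RHS]eq_bigr do rewrite mulmx_sumr bform_suml.
rewrite exchange_big /=; apply: eq_bigr => q _; apply: eq_bigr => pr _.
by rewrite !mul_admx leib_sym.
Qed.

Lemma ad_form_repr X Y s : X = \sum_(pr <- s) A pr.1 pr.2 -> g Y ->
  h X Y = pform s Y.
Proof.
move=> eX [t ->]; rewrite /ad_form pair_form_swap [RHS]pair_form_swap.
congr pform; rewrite -eX.
symmetry; apply: (epsilon_spec (inhabits [::]) (fun s => X = \sum_(pr <- s) A pr.1 pr.2)).
by exists s.
Qed.

Lemma ad_form_repr_r X Y t : g X -> Y = \sum_(pr <- t) A pr.1 pr.2 ->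
  h X Y = pform t X.
Proof.
move=> [s eX] eY; rewrite (ad_form_repr eX); last by exists t.
by rewrite eY pair_form_swap -eX.
Qed.

Lemma ad_form_admx X u v : g X -> h X (A u v) = bform B (u *m X) v.
Proof.
move=> gX; rewrite (ad_form_repr_r (t := [:: (u, v)]) gX); last by rewrite big_seq1.
by rewrite /pair_form big_seq1.
Qed.

Lemma ad_form_admxl u v Y : g Y -> h (A u v) Y = bform B (u *m Y) v.
Proof.
move=> gY; rewrite (ad_form_repr (s := [:: (u, v)])) ?big_seq1 //.
by rewrite /pair_form big_seq1.
Qed.

Lemma admx_der z w X : g X -> A (z *m X) w + A z (w *m X) = lie_br (A z w) X.
Proof.
have lie_br_sumr (Y : 'M[R]_n) I (r : seq I) F :
    lie_br Y (\sum_(i <- r) F i) = \sum_(i <- r) lie_br Y (F i).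
  by rewrite /lie_br -!mulmxE mulmx_sumr mulmx_suml -sumrB.
move=> [s ->]; rewrite !mulmx_sumr admx_suml admx_sumr -big_split lie_br_sumr.
apply: eq_bigr => pr _; apply/eqP/mulmxP => t.
rewrite mulmxDr !mul_admx /lie_br mulmxBr -!mulmxE !mulmxA !mul_admx.
by rewrite leib_fundamental addrK.
Qed.

Lemma admx_lie_br X t : g X ->
  lie_br X (\sum_(pr <- t) A pr.1 pr.2) =
  \sum_(pr <- [seq (- (pr.1 *m X), pr.2) | pr <- t] ++ [seq (- pr.1, pr.2 *m X) | pr <- t])
     A pr.1 pr.2.
Proof.
move=> gX; rewrite big_cat /= !big_map -big_split /= /lie_br -!mulmxE mulmx_sumr.
rewrite mulmx_suml -sumrB; apply: eq_bigr => pr _.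
by rewrite !admxNl -opprD admx_der // /lie_br opprB -!mulmxE.
Qed.

Lemma rep_of_leib3_metric : is_metric_lie_rep (rep_of_leib3 L).
Proof.
have [_ B_nondeg] := leib_form; have [g0 g_lin] := admx_closed.
rewrite /is_metric_lie_rep /=; split; first exact: leib_form.
do 2!split=> //; split; first by move=> X gX u v; apply: admx_skew.
split; first by move=> X Y gX [t ->]; rewrite admx_lie_br //; eexists.
split.
  move=> a X Y Z gX gY [t eZ].
  by rewrite !(ad_form_repr_r _ eZ) ?pair_form_linear //; apply: g_lin.
split; first by move=> X Y gX [t eY]; rewrite (ad_form_repr_r gX eY) (ad_form_repr eY gX).
split.
  move=> X gX X_orth; apply/eqP/mulmxP => z; rewrite mulmx0.
  by apply: B_nondeg => w; rewrite -ad_form_admx // X_orth //; apply: pair_span_gen.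
move=> X Y Z gX gY [t eZ].
have gXY : g (lie_br X Y) by case: gY => s ->; rewrite admx_lie_br //; eexists.
rewrite (ad_form_repr_r gXY eZ) eZ admx_lie_br // (ad_form_repr_r gY erefl).
rewrite /pair_form big_cat !big_map /= -!big_split /=; apply: big1 => pr _.
have /eqP := admx_skew (pr.1 *m Y) pr.2 gX; rewrite addr_eq0 => /eqP skew.
by rewrite !mulNmx !bformNl /lie_br mulmxBr -!mulmxE !mulmxA bformBl skew opprK -opprD subrr.
Qed.

End LeibnizToRep.

Lemma leib3_of_rep_of_leib3 L : is_metric3Leibniz L ->
  leib3_iso (leib3_of_rep (rep_of_leib3 L)) L.
Proof.
move=> L_metric; have p_metric := rep_of_leib3_metric L_metric.
have repDE x y : @repD (rep_of_leib3 L) x y = admx x y.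
  symmetry; apply: (repD_unique p_metric) => [|Y gY]; first exact: pair_span_gen.
  exact: ad_form_admxl.
exists id; split=> //; split; first by exists id.
by split=> // u v w /=; rewrite repDE mul_admx.
Qed.

Lemma conj_by_unique n m (phi : 'rV[R]_n -> 'rV[R]_m) X Y Y' :
  bijective phi -> conj_by phi X Y -> conj_by phi X Y' -> Y = Y'.
Proof. by move=> [psi phiK psiK] XY XY'; apply/eqP/mulmxP => t; rewrite -(psiK t) -XY XY'. Qed.

Section Isomorphisms.
Variables p q : lieRep R.
Hypotheses (p_metric : is_metric_lie_rep p) (q_metric : is_metric_lie_rep q).

Lemma leib3_iso_of_lieRep_iso :
  lieRep_iso p q -> leib3_iso (leib3_of_rep p) (leib3_of_rep q).
Proof.
move=> [phi [phi_lin [phi_bij [phi_isom [pq [qp h_isom]]]]]].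
exists phi; do 3!split=> //; move=> u v w /=.
have [Y [gY conjY]] := pq _ (repD_mem p_metric u v).
rewrite conjY; congr (_ *m _); symmetry; apply: (repD_unique q_metric) => // W gW.
have [X [gX conjX]] := qp W gW.
rewrite (h_isom _ _ _ _ (repD_mem p_metric u v) gX gY gW conjY conjX).
by rewrite (repD_form p_metric) // -conjX phi_isom.
Qed.

Lemma lieRep_iso_of_leib3_iso :
  leib3_iso (leib3_of_rep p) (leib3_of_rep q) -> lieRep_iso p q.
Proof.
move=> [phi [phi_lin [phi_bij [phi_br phi_isom]]]] /=.
have [psi phiK psiK] := phi_bij.
have conj_sum (s : seq ('rV[R]_(lrdim p) * 'rV[R]_(lrdim p))) :
    conj_by phi (\sum_(pr <- s) repD pr.1 pr.2)
                (\sum_(pr <- s) repD (phi pr.1) (phi pr.2)).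
  move=> v; rewrite !mulmx_sumr (linear_on_sum (@lin_closedT _) (linear_map_on phi_lin)) //.
  by apply: eq_bigr => pr _; rewrite -phi_br.
exists phi; do 3!split=> //; split.
  move=> X /(repD_span p_metric) [s ->]; eexists; split; last exact: conj_sum.
  by apply: (lin_closed_sum (rep_closed q_metric)) => pr; apply: repD_mem.
split.
  move=> Y /(repD_span q_metric) [t ->].
  exists (\sum_(pr <- [seq (psi pr.1, psi pr.2) | pr <- t]) repD pr.1 pr.2).
  split; first by apply: (lin_closed_sum (rep_closed p_metric)) => pr; apply: repD_mem.
  have := conj_sum [seq (psi pr.1, psi pr.2) | pr <- t].
  by rewrite !big_map /=; under [in X in conj_by _ _ X -> _]eq_bigr do rewrite !psiK.
move=> X1 X2 Y1 Y2 gX1 gX2 gY1 gY2 conj1 conj2.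
have [s eX1] := repD_span p_metric gX1.
have -> : Y1 = \sum_(pr <- s) repD (phi pr.1) (phi pr.2).
  by apply: conj_by_unique phi_bij conj1 _; rewrite eX1.
rewrite eX1 !(form_suml (rep_closed _) (rep_h_linl _)) //; try by move=> pr; apply: repD_mem.
by apply: eq_bigr => pr _; rewrite !repD_form // -conj2 phi_isom.
Qed.

End Isomorphisms.

End Correspondence.

Theorem mainTheorem5 (R : realType) :
  exists F : lieRep R -> leib3 R,
    (forall p, is_metric_lie_rep p -> is_metric3Leibniz (F p)) /\
    (forall p q, is_metric_lie_rep p -> is_metric_lie_rep q ->
       (lieRep_iso p q <-> leib3_iso (F p) (F q))) /\
    (forall L, is_metric3Leibniz L ->
       exists p, is_metric_lie_rep p /\ leib3_iso (F p) L).
Proof.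
exists (@leib3_of_rep R); split; first exact: leib3_of_rep_metric.
split.
  move=> p q p_metric q_metric; split; first exact: leib3_iso_of_lieRep_iso.
  exact: lieRep_iso_of_leib3_iso.
move=> L L_metric; exists (rep_of_leib3 L); split; first exact: rep_of_leib3_metric.
exact: leib3_of_rep_of_leib3.
Qed.
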